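(* For the modular data of the quantum double of $S_3$, the modular invariants $Z_6$, $Z_{11}$, $Z_{14}$, $Z_{15}$ and the transposes $Z_{41}$, $Z_{51}$ are nimless.
   Context: Primaries $0,\dots,7$, all self-conjugate, with $S=\frac16\begin{pmatrix}1&1&2&2&2&2&3&3\\1&1&2&2&2&2&-3&-3\\2&2&4&-2&-2&-2&0&0\\2&2&-2&4&-2&-2&0&0\\2&2&-2&-2&-2&4&0&0\\2&2&-2&-2&4&-2&0&0\\3&-3&0&0&0&0&3&-3\\3&-3&0&0&0&0&-3&3\end{pmatrix}$, $T=\mathrm{diag}(1,1,1,1,e^{2\pi i/3},e^{4\pi i/3},1,-1)$, fusion coefficients $N_{\lambda\mu}^\nu=\sum_\rho S_{\lambda\rho}S_{\mu\rho}\overline{S_{\nu\rho}}/S_{0\rho}$. Matrices are written as $\sum Z_{\lambda\mu}\chi_\lambda\chi_\mu^*$; for linear forms $s=\sum a_\lambda\chi_\lambda$, $t=\sum b_\mu\chi_\mu$, $st^*$ is the matrix $(a_\lambda b_\mu)$. $Z_6=|\chi_0+\chi_1|^2+|\chi_2|^2+|\chi_3|^2+2|\chi_4|^2+2|\chi_5|^2+\chi_2\chi_3^*+\chi_3\chi_2^*$. With $s_1=\chi_0+\chi_1+\chi_2+\chi_3$, $s_4=\chi_0+\chi_2+\chi_6$, $s_5=\chi_0+\chi_3+\chi_6$: $Z_{ij}=s_is_j^*$. A nimrep of dimension $n$: non-negative integer $n\times n$ matrices $G_\lambda$ with $G_0=I$, $G_{\bar\lambda}=G_\lambda^t$, $G_\lambda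 G_\mu=\sum_\nu N_{\lambda\mu}^\nu G_\nu$. $\mathrm{Exp}(Z)$ is the multiset with $Z_{\mu\mu}$ copies of $\mu$. A nimrep matches $Z$ if $n=\mathrm{Tr}\,Z$ and the $G_\lambda$ are simultaneously unitarily diagonalisable with joint eigenvalues $(S_{\lambda\mu}/S_{0\mu})_\lambda$, $\mu$ running through $\mathrm{Exp}(Z)$ with multiplicity. $Z$ is nimless if no matching nimrep exists. *)

From HB Require Import structures.
From mathcomp Require Import all_boot all_order all_algebra all_field.
Set Implicit Arguments. Unset Strict Implicit. Unset Printing Implicit Defensive.
Import Order.TTheory GRing.Theory Num.Theory.
Local Open Scope ring_scope.

(* 6 * S, row by row *)
Definition S6_entries : seq (seq int) :=
  [:: [:: 1; 1; 2; 2; 2; 2; 3; 3];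
      [:: 1; 1; 2; 2; 2; 2; -3; -3];
      [:: 2; 2; 4; -2; -2; -2; 0; 0];
      [:: 2; 2; -2; 4; -2; -2; 0; 0];
      [:: 2; 2; -2; -2; -2; 4; 0; 0];
      [:: 2; 2; -2; -2; 4; -2; 0; 0];
      [:: 3; -3; 0; 0; 0; 0; 3; -3];
      [:: 3; -3; 0; 0; 0; 0; -3; 3]]%Z.

Definition Smat : 'M[algC]_8 :=
  \matrix_(i < 8, j < 8) ((nth [::] S6_entries i)`_j)%:~R / 6%:R.

(* The T-matrix diag(1,1,1,1,e^{2 pi i/3},e^{4 pi i/3},1,-1);
   w is the primitive cube root of unity e^{2 pi i/3} = (-1 + i sqrt 3)/2. *)
Definition omega3 : algC := (-1 + 'i * sqrtC 3%:R) / 2%:R.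
Definition Tmat : 'M[algC]_8 :=
  diag_mx (\row_(j < 8) nth 0 [:: 1; 1; 1; 1; omega3; omega3 ^+ 2; 1; -1] j).

(* Fusion coefficients (Verlinde formula) *)
Definition fusion (l m v : 'I_8) : algC :=
  \sum_(r < 8) Smat l r * Smat m r * (Smat v r)^* / Smat ord0 r.

(* Charge conjugation: all primaries are self-conjugate *)
Definition conjP (l : 'I_8) : 'I_8 := l.

Definition toC {n : nat} (A : 'M[nat]_n) : 'M[algC]_n :=
  map_mx (fun k : nat => k%:R) A.

Definition nimrep (n : nat) (G : 'I_8 -> 'M[nat]_n) : Prop :=
  [/\ toC (G ord0) = 1%:M,
      forall l, G (conjP l) = (G l)^T
    & forall l m, toC (G l) *m toC (G m) = \sum_(v < 8) fusion l m v *: toC (G v)].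

Definition adjC {n : nat} (U : 'M[algC]_n) : 'M[algC]_n := (map_mx (fun x => x^*) U)^T.

Definition unitary_mx {n : nat} (U : 'M[algC]_n) : Prop :=
  U *m adjC U = 1%:M /\ adjC U *m U = 1%:M.

Definition trZ (Z : 'M[nat]_8) : nat := \sum_(i < 8) Z i i.

(* G matches Z: n = Tr Z and the G_l are simultaneously unitarily
   diagonalisable with joint eigenvalues (S_{l mu}/S_{0 mu})_l, mu running
   through Exp(Z) with multiplicity (the enumeration e lists Exp(Z):
   each mu occurs exactly Z_{mu mu} times). *)
Definition matches (Z : 'M[nat]_8) (n : nat) (G : 'I_8 -> 'M[nat]_n) : Prop :=
  n = trZ Z /\
  exists (U : 'M[algC]_n) (e : 'I_n -> 'I_8),
    [/\ forall mu : 'I_8, #|[set i | e i == mu]| = Z mu mu,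
        unitary_mx U
      & forall l : 'I_8,
          adjC U *m toC (G l) *m U
          = diag_mx (\row_(i < n) (Smat l (e i) / Smat ord0 (e i)))].

Definition nimless (Z : 'M[nat]_8) : Prop :=
  ~ exists (n : nat) (G : 'I_8 -> 'M[nat]_n), nimrep G /\ matches Z G.

Definition mx_of_seqs (s : seq (seq nat)) : 'M[nat]_8 :=
  \matrix_(i < 8, j < 8) nth 0%N (nth [::] s i) j.

(* For linear forms s, t: the matrix s t^* = (a_l b_m) *)
Definition outer (a b : seq nat) : 'M[nat]_8 :=
  \matrix_(i < 8, j < 8) (nth 0%N a i * nth 0%N b j)%N.

(* Z_6 = |x0+x1|^2 + |x2|^2 + |x3|^2 + 2|x4|^2 + 2|x5|^2 + x2 x3^* + x3 x2^* *)
Definition Z6 : 'M[nat]_8 := mx_of_seqs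
  [:: [:: 1; 1; 0; 0; 0; 0; 0; 0];
      [:: 1; 1; 0; 0; 0; 0; 0; 0];
      [:: 0; 0; 1; 1; 0; 0; 0; 0];
      [:: 0; 0; 1; 1; 0; 0; 0; 0];
      [:: 0; 0; 0; 0; 2; 0; 0; 0];
      [:: 0; 0; 0; 0; 0; 2; 0; 0];
      [:: 0; 0; 0; 0; 0; 0; 0; 0];
      [:: 0; 0; 0; 0; 0; 0; 0; 0]]%N.

Definition s1 : seq nat := [:: 1; 1; 1; 1; 0; 0; 0; 0]%N.
Definition s4 : seq nat := [:: 1; 0; 1; 0; 0; 0; 1; 0]%N.
Definition s5 : seq nat := [:: 1; 0; 0; 1; 0; 0; 1; 0]%N.

Definition Z11 : 'M[nat]_8 := outer s1 s1.
Definition Z14 : 'M[nat]_8 := outer s1 s4.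
Definition Z15 : 'M[nat]_8 := outer s1 s5.
Definition Z41 : 'M[nat]_8 := outer s4 s1.
Definition Z51 : 'M[nat]_8 := outer s5 s1.

From mathcomp Require Import all_boot all_order all_algebra all_field.
From mathcomp Require Import ring zify.
Set Implicit Arguments. Unset Strict Implicit. Unset Printing Implicit Defensive.
Import Order.TTheory GRing.Theory Num.Theory.
Local Open Scope ring_scope.

(* Pick a primary [l] whose normalised S-values [S_(l mu) / S_(0 mu)] on
   Exp(Z) are roots of [x^2 = x + 2], i.e. lie in {2, -1}.  In a matching
   nimrep, [G_l] is then a symmetric non-negative integer matrix with
   [G_l^2 = G_l + 2] whose trace, the sum of its eigenvalues over Exp(Z), is
   odd.  But the diagonal entries of such a matrix are even: the diagonal of
   [G^2 = G + 2] gives [G_ii^2 <= G_ii + 2], so [G_ii <= 2], and [G_ii = 1]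
   would force a neighbour [k] of [i] whose row of [G] is supported at [i]
   only, giving [G_ik^2 = 2]. *)

Section SquareEqAddTwo.

Variables (n : nat) (G : 'M[nat]_n).
Hypotheses (G_sym : G^T = G) (G_sqr : G *m G = G + 2%:M).

Lemma entry_sym i j : G j i = G i j.
Proof. by move/matrixP/(_ i j): G_sym; rewrite mxE. Qed.

Lemma sqr_entry i j : (\sum_k G i k * G k j = G i j + 2 * (i == j))%N.
Proof. by move/matrixP/(_ i j): G_sqr; rewrite !mxE; case: (i == j). Qed.

Lemma diag_le2 i : (G i i <= 2)%N.
Proof. have := sqr_entry i i; rewrite (bigD1 i) //= eqxx; nia. Qed.

Lemma diag1_row_offdiag0 i : G i i = 1%N -> forall l, l != i -> G i l = 0%N.
Proof.
move=> Gii l l_i; case: (posnP (G i l)) => // Gil_gt0; exfalso.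
(* Since [G_ii = 1], the term [G_ii G_ij] already exhausts [(G^2)_ij = G_ij]. *)
have row_l j : j != i -> G l j = 0%N.
  move=> j_i; have := sqr_entry i j.
  rewrite (bigD1 i) //= Gii mul1n eq_sym (negbTE j_i) muln0 addn0.
  move/eqP; rewrite -{2}[G i j]addn0 eqn_add2l sum_nat_eq0.
  by move/forall_inP/(_ l l_i); rewrite muln_eq0 gtn_eqF //= => /eqP.
have := sqr_entry l l; rewrite (bigD1 i) //= big1 => [|k k_i]; last first.
  by rewrite row_l.
rewrite (row_l l l_i) eqxx entry_sym /= addn0; case: (leqP (G i l) 1); nia.
Qed.

Lemma diag_neq1 i : G i i != 1%N.
Proof.
apply/eqP => Gii; have := sqr_entry i i.
rewrite (bigD1 i) //= big1 => [|k k_i]; last by rewrite diag1_row_offdiag0.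
rewrite Gii eqxx /=; lia.
Qed.

Lemma diag_even i : ~~ odd (G i i).
Proof. by move: (diag_le2 i) (diag_neq1 i); case: (G i i) => [|[|[|]]]. Qed.

Lemma mxtrace_even : ~~ odd (\tr G).
Proof. by rewrite -dvdn2; apply: dvdn_sum => i _; rewrite dvdn2 diag_even. Qed.

End SquareEqAddTwo.

Section UnitaryDiagonalisation.

Variables (n : nat) (U X : 'M[algC]_n) (d : 'rV[algC]_n).
Hypotheses (U_unitary : unitary_mx U) (X_diag : adjC U *m X *m U = diag_mx d).

Lemma unitary_diagE : X = U *m diag_mx d *m adjC U.
Proof.
have [UU' _] := U_unitary.
by rewrite -X_diag !mulmxA UU' mul1mx -mulmxA UU' mulmx1.
Qed.

Lemma mxtrace_unitary_diag : \tr X = \sum_i d 0 i.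
Proof.
have [_ U'U] := U_unitary.
by rewrite unitary_diagE mxtrace_mulC mulmxA U'U mul1mx mxtrace_diag.
Qed.

Lemma sqr_unitary_diag (c : algC) :
  (forall i, d 0 i ^+ 2 = d 0 i + c) -> X *m X = X + c%:M.
Proof.
move=> d_sqr; have [UU' U'U] := U_unitary.
have D_sqr : diag_mx d *m diag_mx d = diag_mx d + c%:M.
  rewrite mulmx_diag; apply/matrixP => i j; rewrite !mxE.
  by case: (i == j); rewrite ?mulr1n ?mulr0n ?addr0 // -expr2 d_sqr.
rewrite {1 2}unitary_diagE -!mulmxA (mulmxA (adjC U)) U'U mul1mx.
rewrite (mulmxA (diag_mx d)) D_sqr mulmxDl mulmxDr !mulmxA -unitary_diagE.
by rewrite mul_mx_scalar -scalemxAl UU' scalemx1.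
Qed.

End UnitaryDiagonalisation.

Lemma toC_inj n : injective (@toC n).
Proof.
move=> A B /matrixP AB; apply/matrixP => i j.
by have /eqP := AB i j; rewrite !mxE eqr_nat => /eqP.
Qed.

Lemma toC_sqr_eq_add2 n (A : 'M[nat]_n) :
  toC A *m toC A = toC A + 2%:M -> A *m A = A + 2%:M.
Proof.
by move=> A_sqr; apply: toC_inj; rewrite /toC map_mxM map_mxD map_scalar_mx.
Qed.

Lemma sum_by_multiplicity (I J : finType) (R : nmodType) (e : I -> J)
    (m : J -> nat) (f : J -> R) :
  (forall j, #|[set i | e i == j]| = m j) -> \sum_i f (e i) = \sum_j f j *+ m j.
Proof.
move=> e_mult; rewrite (partition_big e xpredT) //=; apply: eq_bigr => j _.
rewrite (eq_bigr (fun=> f j)) => [|i /eqP <- //].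
by rewrite sumr_const -e_mult cardsE.
Qed.

Definition S6 (l mu : 'I_8) : int := (nth [::] S6_entries l)`_mu.

(* In [Smat] the division by 6 applies to the whole matrix, i.e. it is a
   product with the inverse of the scalar matrix [6%:M]. *)
Lemma SmatE l mu : Smat l mu = (S6 l mu)%:~R / 6%:R.
Proof.
rewrite /Smat.
have -> : (6%:R : 'M[algC]_8) = (6%:R)%:M.
  by apply/matrixP => i j; rewrite !mxE; case: (i == j); rewrite ?mulr0n ?addr0.
have -> : ((6%:R)%:M : 'M[algC]_8)^-1 = invmx (6%:R)%:M by [].
by rewrite invmx_scalar -mulmxE mul_mx_scalar !mxE mulrC.
Qed.

Definition Sratio (l mu : 'I_8) : int := (S6 l mu %/ S6 ord0 mu)%Z.

Lemma S6_row0_dvd_neq0 l mu : (S6 ord0 mu %| S6 l mu)%Z && (S6 ord0 mu != 0).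
Proof. by move: l mu => [[|[|[|[|[|[|[|[|//]]]]]]]] ?] [[|[|[|[|[|[|[|[|//]]]]]]]] ?]. Qed.

Lemma SratioE l mu : Smat l mu / Smat ord0 mu = (Sratio l mu)%:~R.
Proof.
have /andP[dvd_l S0_neq0] := S6_row0_dvd_neq0 l mu.
rewrite !SmatE -{1}(divzK dvd_l) intrM; field.
by rewrite intr_eq0 S0_neq0.
Qed.

Definition exp_trace (Z : 'M[nat]_8) (l : 'I_8) : int :=
  \sum_mu (Z mu mu)%:Z * Sratio l mu.

Lemma nimless_of_odd_trace (Z : 'M[nat]_8) (l : 'I_8) :
    (forall mu, (Z mu mu != 0)%N -> Sratio l mu ^+ 2 = Sratio l mu + 2) ->
  odd `|exp_trace Z l| -> nimless Z.
Proof.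
move=> Sratio_sqr odd_tr [n [G [[_ G_sym _]]]].
move=> [_ [U [e [e_mult U_unitary G_diag]]]].
have {}G_diag := G_diag l; set d := \row_i _ in G_diag.
have d_sqr i : d 0 i ^+ 2 = d 0 i + 2.
  have Z_ei : (Z (e i) (e i) != 0)%N.
    by rewrite -e_mult -lt0n card_gt0; apply/set0Pn; exists i; rewrite inE.
  by rewrite mxE SratioE -rmorphXn Sratio_sqr // rmorphD.
have G_sqr : G l *m G l = G l + 2%:M.
  exact/toC_sqr_eq_add2/(sqr_unitary_diag U_unitary G_diag).
have tr_G : (\tr (G l))%:Z = exp_trace Z l.
  apply: (@intr_inj algC); rewrite -pmulrn -trace_map_mx.
  rewrite (mxtrace_unitary_diag U_unitary G_diag) rmorph_sum /=.
  rewrite (eq_bigr (fun i => (Sratio l (e i))%:~R)) => [|i _]; last first.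
    by rewrite mxE SratioE.
  rewrite (sum_by_multiplicity (fun mu => (Sratio l mu)%:~R) e_mult).
  by apply: eq_bigr => mu _; rewrite intrM -pmulrn mulr_natl.
have := mxtrace_even (esym (G_sym l)) G_sqr.
by rewrite -[\tr _]absz_nat tr_G odd_tr.
Qed.

Ltac trace_obstruction l :=
  apply: (@nimless_of_odd_trace _ (@Ordinal 8 l isT));
  [ by move=> [[|[|[|[|[|[|[|[|//]]]]]]]] ?]; rewrite !mxE
  | by rewrite /exp_trace !big_ord_recr big_ord0 !mxE ].

Theorem proposition6p1 :
  nimless Z6 /\ nimless Z11 /\ nimless Z14 /\ nimless Z15 /\ nimless Z41 /\ nimless Z51.
Proof.
split; first by trace_obstruction 2%N.
split; first by trace_obstruction 2%N.
split; first by trace_obstruction 3%N.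
split; first by trace_obstruction 2%N.
split; first by trace_obstruction 3%N.
by trace_obstruction 2%N.
Qed.
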